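(* Let $n\ge1$ and $P=\Phi^+(A_n)=\{(i,j)\colon 1\le i,j\le n,\ i+j\ge n+1\}$. Then $\sum_{p\in P}(-1)^{\mathrm{rk}(p)}\mathbb{1}_p\equiv \frac{n}{2}$, where $\mathrm{rk}(i,j)=i+j-(n+1)$.
   Context: $P$ is ordered by $(i,j)\le(i',j')$ iff $i\le i'$ and $j\le j'$; $\mathrm{rk}$ is its rank function. $\mathcal{J}(P)$ is the set of order ideals of $P$. For $x\in P$, $I\in\mathcal{J}(P)$: $\mathbb{1}_x(I)=1$ if $x\in I$, else $0$; $T_x^+(I)=1$ if $x$ is a minimal element of $P\setminus I$, else $0$; $T_x^-(I)=1$ if $x$ is a maximal element of $I$, else $0$; $T_x=T_x^+-T_x^-$. For $f,g\colon\mathcal{J}(P)\to\mathbb{R}$, $f\equiv g$ means $f-g=\sum_{x\in P}c_xT_x$ for some real constants $c_x$; a real number denotes the corresponding constant function. *)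

From HB Require Import structures.
From mathcomp Require Import all_boot all_order all_algebra.
From mathcomp Require Import reals.
Set Implicit Arguments. Unset Strict Implicit. Unset Printing Implicit Defensive.
Import Order.TTheory GRing.Theory Num.Theory.
Local Open Scope ring_scope.

(* Elements (i,j) of [1..n]^2 are encoded 0-based as (i-1, j-1) : 'I_n * 'I_n. *)
Definition pt (n : nat) := ('I_n * 'I_n)%type.

(* membership in P = Phi^+(A_n): i + j >= n + 1, i.e. (i-1)+(j-1) >= n-1 *)
Definition inP (n : nat) (x : pt n) : bool := (n.-1 <= x.1 + x.2)%N.

Definition leP (n : nat) (x y : pt n) : bool := (x.1 <= y.1)%N && (x.2 <= y.2)%N.

(* rank: rk(i,j) = i + j - (n+1) = (i-1)+(j-1) - (n-1) *)
Definition rk (n : nat) (x : pt n) : nat := (x.1 + x.2 - n.-1)%N.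

Definition is_ideal (n : nat) (I : {set pt n}) : bool :=
  [forall x, (x \in I) ==>
     (inP x && [forall y, (inP y && leP y x) ==> (y \in I)])].

Definition ind (R : realType) (n : nat) (x : pt n) (I : {set pt n}) : R :=
  if x \in I then 1 else 0.

Definition Tplus (R : realType) (n : nat) (x : pt n) (I : {set pt n}) : R :=
  if [&& inP x, x \notin I &
        [forall y, (inP y && (y \notin I) && leP y x) ==> (y == x)]]
  then 1 else 0.

Definition Tminus (R : realType) (n : nat) (x : pt n) (I : {set pt n}) : R :=
  if (x \in I) && [forall y, ((y \in I) && leP x y) ==> (y == x)]
  then 1 else 0.

Definition toggle (R : realType) (n : nat) (x : pt n) (I : {set pt n}) : R :=
  Tplus R x I - Tminus R x I.

Definition tequiv (R : realType) (n : nat) (f g : {set pt n} -> R) : Prop :=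
  exists c : pt n -> R, forall I : {set pt n}, is_ideal I ->
    f I - g I = \sum_(x : pt n | inP x) c x * toggle R x I.

From Pilot Require Import Defs.
From HB Require Import structures.
From mathcomp Require Import all_boot all_order all_algebra.
From mathcomp Require Import reals.
From mathcomp Require Import zify lra.
Set Implicit Arguments. Unset Strict Implicit. Unset Printing Implicit Defensive.
Import Order.TTheory GRing.Theory Num.Theory.
Local Open Scope ring_scope.

(* An order ideal I of P is determined by its column heights: h_c, the number
   of elements of I in the c-th column of the staircase (which has c points),
   and I contains exactly the points of rank < h_c of that column.  Moreover
   h_c <= c and h_(c+1) <= h_c + 1, with h_0 = h_(n+1) = 0.
   In these terms 1_x, T_x^+ and T_x^- are explicit, and summing
   2 (-1)^rk(x) 1_x + [rk x even] T_x over the column c gives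
   1 + g_c - g_(c-1), where g_c = [h_c odd and h_(c+1) = h_c + 1].  The total
   telescopes to n, so c_x = -1/2 for rk x even and c_x = 0 otherwise. *)

Lemma prefix_sumE (L : nat) (b : nat -> bool) :
  (forall k, b k.+1 -> b k) -> (forall k, (L <= k)%N -> ~~ b k) ->
  forall k, b k = (k < \sum_(i < L) b i)%N.
Proof.
elim: L b => [|L IH] b down out k; first by rewrite big_ord0; apply/negbTE/out.
rewrite big_ord_recl /=.
under eq_bigr => i _ do rewrite /bump add1n.
case b0: (b 0).
  case: k => [|k] //; rewrite add1n ltnS.
  by apply: (IH (fun m => b m.+1)) => m; [apply: down | rewrite -ltnS; apply: out].
have bF m : b m = false by elim: m => // m IHm; apply/negbTE/negP => /down; rewrite IHm.
by rewrite big1 => [|i _]; rewrite bF.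
Qed.

Lemma sum_sign_prefix (R : pzRingType) (c a : nat) : (a <= c)%N ->
  \sum_(k < c) (-1) ^+ k * (k < a)%N%:R = (odd a)%:R :> R.
Proof.
move=> le_ac; transitivity (\sum_(k < a) (-1) ^+ k : R).
  rewrite (big_ord_widen _ _ le_ac) [RHS]big_mkcond /=.
  by apply: eq_bigr => k _; rewrite mulr_natr mulrb.
elim: a {le_ac} => [|a IHa]; first by rewrite big_ord0.
rewrite big_ord_recr /= IHa -signr_odd; case: (odd a) => /=; rewrite ?expr0 ?expr1.
- by rewrite addrN.
- by rewrite add0r.
Qed.

Lemma sum_nat_pick (R : pzSemiRingType) (c m : nat) (b : pred nat) :
  (forall k, b k -> k = m) -> \sum_(k < c) (b k)%:R = ((m < c)%N && b m)%:R :> R.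
Proof.
move=> bm; rewrite (eq_bigr (fun k : 'I_c => if k == m :> nat then (b k)%:R else 0)).
  by rewrite -big_mkcond (big_ord1_eq _ (fun k => (b k)%:R)); case: (m < c)%N.
by move=> k _; case: eqP => // ne; case bk: (b k) => //; case: ne; apply: bm.
Qed.

(* The summand at the point of rank [k] of a column of height [a] whose left
   and right neighbouring columns have heights [p] and [q]. *)
Definition column_summand (R : pzRingType) (a p q k : nat) : R :=
  2 * ((-1) ^+ k * (k < a)%N%:R) + (~~ odd k)%:R *
    (((k == a) && ((k == 0) || (k <= p)))%N%:R - ((k.+1 == a) && (q <= a))%N%:R).

Lemma column_sum (R : realDomainType) (c a p q : nat) :
  (a <= c)%N -> (p < c)%N -> (a <= p.+1)%N -> (q <= a.+1)%N ->
  \sum_(k < c) column_summand R a p q k =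
  1 + (odd a && (q == a.+1))%:R - (odd p && (a == p.+1))%:R.
Proof.
move=> le_ac lt_pc le_ap le_qa; rewrite /column_summand.
rewrite big_split /= -mulr_sumr sum_sign_prefix //.
under eq_bigr => k _ do rewrite mulrBr -!natrM !mulnb.
rewrite sumrB (@sum_nat_pick _ _ a (fun k => [&& ~~ odd k, k == a & (k == 0) || (k <= p)%N]));
  last by move=> k /and3P[_ /eqP].
rewrite (@sum_nat_pick _ _ a.-1 (fun k => [&& ~~ odd k, k.+1 == a & (q <= a)%N]));
  last by move=> k /and3P[_ /eqP <-].
set plus := [&& _, _, _ & _]; set minus := [&& _, _, _ & _].
set up := odd a && _; set down := odd p && _.
have : ((odd a).*2 + plus + down = 1 + up + minus)%N.
  rewrite /plus /minus /up /down {plus minus up down}.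
  by case: a le_ac le_ap le_qa => [|a] *; rewrite /= ?eqxx; lia.
move/(congr1 (fun m => m%:R : R)); rewrite !natrD -mul2n natrM; lra.
Qed.

Lemma sum_ord_shift (V : nmodType) (n d : nat) (F : nat -> V) : (d <= n)%N ->
  \sum_(i < n) (if (d <= i)%N then F (i - d)%N else 0) = \sum_(k < n - d) F k.
Proof.
move=> le_dn; rewrite -(big_mkord xpredT (fun i => if (d <= i)%N then F (i - d)%N else 0)).
rewrite (big_cat_nat _ (n := d)) //=.
rewrite big_nat_cond big1 ?add0r; last by move=> i /andP[/andP[_ lt_id] _]; rewrite leqNgt lt_id.
by rewrite -{1}(add0n d) big_addn big_mkord; apply: eq_bigr => k _; rewrite leq_addl addnK.
Qed.

Lemma sum_inP_columns (V : nmodType) (n : nat) (G : nat -> nat -> V) :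
  \sum_(x : pt n | inP x) G x.2 (rk x) = \sum_(j < n) \sum_(k < j.+1) G j k.
Proof.
rewrite big_mkcond /=.
transitivity (\sum_(i < n) \sum_(j < n) (if inP (i, j) then G j (rk (i, j)) else 0)).
  by rewrite pair_big /=; apply: eq_bigr => -[i j] _.
rewrite exchange_big /=; apply: eq_bigr => j _.
have lt_jn := ltn_ord j.
rewrite -[j.+1](subKn lt_jn) -(@sum_ord_shift _ _ (n - j.+1)); last lia.
by apply: eq_bigr => i _; rewrite /inP /rk /=; congr (if _ then G j _ else _); lia.
Qed.

Lemma pt_eqE n (x y : pt n) : (x == y) = (x.1 == y.1 :> nat) && (x.2 == y.2 :> nat).
Proof. by []. Qed.

Section IdealHeights.
Variables (n : nat) (I : {set pt n}).

Definition memI (i j : nat) : bool :=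
  [exists x : pt n, [&& x \in I, x.1 == i :> nat & x.2 == j :> nat]].

Lemma memI_pt (x : pt n) : memI x.1 x.2 = (x \in I).
Proof.
apply/existsP/idP => [[[y1 y2] /and3P[yI /eqP/val_inj e1 /eqP/val_inj e2]]|xI].
  by move: yI; rewrite /= in e1 e2; rewrite e1 e2 -surjective_pairing.
by exists x; rewrite xI !eqxx.
Qed.

Lemma memI_lt i j : memI i j -> (i < n)%N && (j < n)%N.
Proof. by case/existsP => y /and3P[_ /eqP <- /eqP <-]; rewrite !ltn_ord. Qed.

Hypothesis idealI : is_ideal I.

Lemma memI_inP i j : memI i j -> (n.-1 <= i + j)%N.
Proof.
case/existsP => y /and3P[yI /eqP <- /eqP <-].
by move/forallP: idealI => /(_ y) /implyP /(_ yI) /andP[].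
Qed.

Lemma memI_down i j i' j' : memI i j ->
  (i' <= i)%N -> (j' <= j)%N -> (n.-1 <= i' + j')%N -> memI i' j'.
Proof.
move=> hij le_i le_j hP; have /andP[ltin ltjn] := memI_lt hij.
case/existsP: hij => y /and3P[yI /eqP e1 /eqP e2].
have lti' : (i' < n)%N by lia.
have ltj' : (j' < n)%N by lia.
apply/existsP; exists (Ordinal lti', Ordinal ltj'); rewrite !eqxx !andbT.
move/forallP: idealI => /(_ y) /implyP /(_ yI) /andP[_ /forallP /(_ (Ordinal lti', Ordinal ltj'))].
by rewrite /inP /Defs.leP /= e1 e2 hP le_i le_j.
Qed.

(* [height c] is the number of elements of [I] in the [c]-th column of the
   staircase (columns counted from 1; the [c]-th column has [c] points). *)
Definition height (c : nat) : nat := (\sum_(k < c) memI (n.-1 - c.-1 + k) c.-1)%N.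

Lemma height_outside j : (n <= j)%N -> height j.+1 = 0%N.
Proof. by move=> hj; apply: big1 => k _; case h: memI => //; move: (memI_lt h); lia. Qed.

Lemma memI_height i j :
  memI i j = (n.-1 <= i + j)%N && (i + j - n.-1 < height j.+1)%N.
Proof.
case: (ltnP j n) => hj; last first.
  by rewrite height_outside // ltn0 andbF; case h: memI => //; move: (memI_lt h); lia.
have column k : memI (n.-1 - j + k) j = (k < height j.+1)%N.
  apply: (prefix_sumE (b := fun k => memI (n.-1 - j + k) j)) => [{}k h|{}k hk].
    by apply: (memI_down h); lia.
  by apply/negP => /memI_lt; lia.
case: (leqP n.-1 (i + j)) => hP /=; last by apply/negbTE/negP => /memI_inP; lia.
by rewrite -column; congr memI; lia.
Qed.

Lemma height_le c : (height c <= c)%N.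
Proof.
rewrite -[leqRHS]card_ord -sum1_card.
by apply: leq_sum => k _; rewrite leq_b1.
Qed.

Lemma height_succ c : (height c.+1 <= (height c).+1)%N.
Proof.
case: c => [|c]; first by rewrite [height 0]big_ord0; exact: height_le.
rewrite leqNgt; apply/negP => lt_h.
case: (ltnP c.+1 n) => hc; last by rewrite (height_outside hc) in lt_h.
set i := (n.-1 - c.+1 + (height c.+1).+1)%N.
have top : memI i c.+1 by rewrite memI_height; lia.
have := memI_down top (leqnn i) (leqnSn c).
by rewrite memI_height; lia.
Qed.

Lemma mem_height (x : pt n) : inP x -> (x \in I) = (rk x < height x.2.+1)%N.
Proof. by rewrite -memI_pt memI_height /inP /rk => ->. Qed.

Lemma maximal_in_idealE (x : pt n) :
  (x \in I) && [forall y, ((y \in I) && Defs.leP x y) ==> (y == x)] =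
  [&& x \in I, ~~ memI x.1.+1 x.2 & ~~ memI x.1 x.2.+1].
Proof.
case xI: (x \in I) => //=; have xP := memI_inP (etrans (memI_pt x) xI).
case: x xI xP => x1 x2 /= xI xP.
apply/forallP/andP => [maxx | [up1 up2] [y1 y2]].
  split; apply/negP => /existsP[[y1 y2] /and3P[yI /eqP /= e1 /eqP /= e2]];
  move/implyP: (maxx (y1, y2)); rewrite yI /Defs.leP pt_eqE /= e1 e2 leqnSn leqnn => /(_ isT);
  lia.
apply/implyP => /andP[yI /andP[/= le1 le2]]; rewrite -memI_pt /= in yI.
rewrite pt_eqE /=; apply/negPn/negP => y_neq_x.
have [lt1|ge1] := ltnP x1 y1; first by case/negP: up1; apply: (memI_down yI); lia.
by case/negP: up2; apply: (memI_down yI); lia.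
Qed.

Lemma minimal_outside_idealE (x : pt n) : inP x ->
  [&& inP x, x \notin I & [forall y, (inP y && (y \notin I) && Defs.leP y x) ==> (y == x)]] =
  (x \notin I) && ((rk x == 0)%N || memI x.1.-1 x.2 && memI x.1 x.2.-1).
Proof.
move=> xP; rewrite xP /=; case xI: (x \in I) => //=.
case: x xI xP => x1 x2 /= xI; rewrite /inP /rk /= => xP.
have := ltn_ord x1; have := ltn_ord x2 => lt2 lt1.
apply/forallP/idP => [minx | down [y1 y2]].
  case: eqP => [//|/eqP rk_pos]; rewrite orFb.
  have lt1' : (x1.-1 < n)%N by lia.
  have lt2' : (x2.-1 < n)%N by lia.
  apply/andP; split; apply: contraT => out.
    move/implyP: (minx (Ordinal lt1', x2)).
    by rewrite -memI_pt /= out /inP /Defs.leP pt_eqE /= leq_pred leqnn; lia.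
  move/implyP: (minx (x1, Ordinal lt2')).
  by rewrite -memI_pt /= out /inP /Defs.leP pt_eqE /= leq_pred leqnn; lia.
apply/implyP => /andP[/andP[yP yI] /andP[/= le1 le2]]; rewrite -memI_pt /= in yI.
move: yP; rewrite /inP pt_eqE /= => yP; apply/negPn/negP => y_neq_x.
case/orP: down => [|/andP[d1 d2]]; first lia.
have [lt1'|ge1] := ltnP y1 x1; first by case/negP: yI; apply: (memI_down d1); lia.
by case/negP: yI; apply: (memI_down d2); lia.
Qed.

Variable R : realType.

Lemma ind_height (x : pt n) : inP x -> ind R x I = (rk x < height x.2.+1)%N%:R.
Proof. by move=> xP; rewrite /ind -mulrb mem_height. Qed.

Lemma Tminus_height (x : pt n) : inP x ->
  Tminus R x I = (((rk x).+1 == height x.2.+1) && (height x.2.+2 <= height x.2.+1))%N%:R.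
Proof.
move=> xP; rewrite /Tminus -mulrb maximal_in_idealE mem_height // !memI_height.
by move: xP; rewrite /inP /rk => xP; congr (_%:R); lia.
Qed.

Lemma Tplus_height (x : pt n) : inP x ->
  Tplus R x I = ((rk x == height x.2.+1) && ((rk x == 0) || (rk x <= height x.2)))%N%:R.
Proof.
move=> xP; rewrite /Tplus -mulrb minimal_outside_idealE // mem_height // !memI_height.
case: x xP => x1 x2; rewrite /inP /rk /= => xP; congr (_%:R).
have := ltn_ord x1; have [x2_0|x2_pos] := posnP x2; first lia.
by have := ltn_ord x2; rewrite (prednK x2_pos); lia.
Qed.

Lemma summand_height (x : pt n) : inP x ->
  2 * ((-1) ^+ rk x * ind R x I) + (~~ odd (rk x))%:R * toggle R x I =
  column_summand R (height x.2.+1) (height x.2) (height x.2.+2) (rk x).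
Proof. by move=> xP; rewrite ind_height // /toggle Tplus_height // Tminus_height. Qed.

End IdealHeights.

Lemma sum_sign_ind_even_toggle (R : realType) (n : nat) (I : {set pt n}) : is_ideal I ->
  \sum_(x : pt n | inP x) (2 * ((-1) ^+ rk x * ind R x I) + (~~ odd (rk x))%:R * toggle R x I)
  = n%:R.
Proof.
move=> idealI.
pose g j : R := (odd (height I j) && (height I j.+1 == (height I j).+1))%:R.
rewrite (eq_bigr _ (summand_height idealI R)).
rewrite (sum_inP_columns n
  (fun j => column_summand R (height I j.+1) (height I j) (height I j.+2))).
rewrite (eq_bigr (fun j : 'I_n => 1 + (g j.+1 - g j))) => [|j _]; last first.
  by rewrite column_sum ?ltnS ?height_le ?height_succ // -addrA.
rewrite big_split sumr_const card_ord -(big_mkord xpredT (fun j => g j.+1 - g j)).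
by rewrite telescope_sumr // /g height_outside // [height I 0]big_ord0 /= andbF subr0 addr0.
Qed.

Theorem corollary3p29 (R : realType) (n : nat) (hn : (1 <= n)%N) :
  tequiv (fun I : {set pt n} =>
            \sum_(p : pt n | inP p) (-1) ^+ rk p * ind R p I)
         (fun _ => n%:R / 2).
Proof.
exists (fun x => - 2^-1 * (~~ odd (rk x))%:R) => I idealI.
have := sum_sign_ind_even_toggle R idealI.
rewrite big_split /= -mulr_sumr => key.
under [in RHS]eq_bigr => x _ do rewrite -mulrA.
by rewrite -mulr_sumr; lra.
Qed.
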